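(* Let $\alpha$ be a composition, $w\in CRHW_n$ with $w(\alpha)=\beta\ne0$, and let $\tau=\tau_w$. Then for every $j\ge2$ the entries of $\tau$ in column $j$ strictly decrease from top to bottom.
   Context: A composition is a finite sequence $\alpha=(\alpha_1,\dots,\alpha_k)$ of positive integers, with diagram the boxes $(i,j)$, $1\le i\le k$, $1\le j\le\alpha_i$ (rows top to bottom, columns left to right). Box-adding operators: $\mathfrak t_1(\alpha)=(1,\alpha_1,\dots,\alpha_k)$ (a new row added on top); for $i\ge2$, $\mathfrak t_i(\alpha)$ increases the leftmost part of $\alpha$ equal to $i-1$ by $1$ (adding a box in column $i$ of that row), and is $0$ if there is no such part; $\mathfrak t_i(0)=0$. A word $w=\mathfrak t_{i_1}\cdots\mathfrak t_{i_n}$ acts by $w(\alpha)=\mathfrak t_{i_1}(\cdots\mathfrak t_{i_n}(\alpha))$. It is a reverse hookword if $i_1\le\cdots\le i_{k+1}>i_{k+2}>\cdots>i_n$ for some $0\le k\le n-1$, connected if $\{i_1,\dots,i_n\}$ is a set of consecutive integers; $CRHW_n$ is the set of connected reverse hookwords of length $n$. If $w(\alpha)=\beta\ne0$, applying $\mathfrak t_{i_n},\dots,\mathfrak t_{i_1}$ successively adds one box at each step (the box added by $\mathfrak t_{i_m}$ lies in column $i_m$; boxes already present are shifted down by one row whenever $\mathfrak t_1$ adds a new top row). The added boxes form the skew shape $\beta/\!\!/\alpha$ (the boxes of $\beta$ not in the copy of $\alpha$ occupying the bottom $\ell(\alpha)$ rows). $\tau_w$ is the filling of $\beta/\!\!/\alpha$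 in which the box added by $\mathfrak t_{i_m}$ has entry $m$. *)

From mathcomp Require Import all_boot.
Set Implicit Arguments. Unset Strict Implicit. Unset Printing Implicit Defensive.

(* A composition: a finite sequence of positive integers (row lengths, top to bottom). *)
Definition composition (a : seq nat) : bool := all (fun p => 0 < p) a.

(* The box-adding operator t_i; [None] plays the role of 0.
   t_1 adds a new row of length 1 on top; for i >= 2, t_i increments the
   leftmost part equal to i-1 (None if there is none).  t_0 is not an operator
   of the paper and is sent to None. *)
Definition tOp (i : nat) (a : seq nat) : option (seq nat) :=
  if i == 0 then None
  else if i == 1 then Some (1 :: a)
  else if (i.-1) \in a then Some (set_nth 0 a (index i.-1 a) i)
  else None.

(* A word w = t_{i_1} ... t_{i_n} is represented by the list [:: i_1; ...; i_n].
   w(alpha) = t_{i_1}(...(t_{i_n}(alpha))). *)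
Definition applyWord (w : seq nat) (a : seq nat) : option (seq nat) :=
  foldr (fun i acc => obind (tOp i) acc) (Some a) w.

Definition reverse_hookword (w : seq nat) : Prop :=
  exists2 k, k < size w &
    sorted leq (take k.+1 w) /\ sorted (fun x y => y < x) (drop k w).

Definition connected_word (w : seq nat) : Prop :=
  exists a b, forall x, (x \in w) = (a <= x <= b).

Definition CRHW (n : nat) (w : seq nat) : Prop :=
  [/\ size w = n, all (fun i => 0 < i) w, reverse_hookword w & connected_word w].

(* A box of the filling: (row, column, entry), rows and columns 1-based,
   rows counted from the top of the current diagram. *)
Definition box := (nat * nat * nat)%type.

(* One step: apply t_i with entry m to a state (current composition, boxes added
   so far).  t_1 shifts all previously added boxes down one row and adds the box
   (1,1); t_i (i>=2) adds a box in column i of the leftmost row of length i-1. *)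
Definition fillStep (mi : nat * nat) (st : option (seq nat * seq box))
  : option (seq nat * seq box) :=
  let: (m, i) := mi in
  match st with
  | None => None
  | Some (a, bs) =>
      match tOp i a with
      | None => None
      | Some a' =>
          if i == 1 then
            Some (a', (1, 1, m) :: [seq (b.1.1.+1, b.1.2, b.2) | b <- bs])
          else Some (a', ((index i.-1 a).+1, i, m) :: bs)
      end
  end.

(* Run t_{i_n}, ..., t_{i_1} successively; the box added by t_{i_m} gets entry m. *)
Definition fillRun (w : seq nat) (a : seq nat) : option (seq nat * seq box) :=
  foldr fillStep (Some (a, [::])) (zip (iota 1 (size w)) w).

(* tau_w : the list of boxes of beta // alpha with their entries ([::] if w(alpha)=0). *)
Definition tau (w : seq nat) (a : seq nat) : seq box :=
  if fillRun w a is Some (_, bs) then bs else [::].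

Example tau_ex : tau [:: 2; 1] [:: 1] = [:: (1, 2, 1); (1, 1, 2)].
Proof. by []. Qed.

From mathcomp Require Import all_boot.
From mathcomp Require Import zify.

(* A reverse hookword contains no subword c+1 ... c ... c+1.  The filling is
   built by applying the letters of w from right to left, and we carry the
   invariant that for every letter j still to be applied, the row that t_j
   would extend (the leftmost row of length j-1) lies strictly below every box
   already in column j.  Each new box of a column j >= 2 then lands below the
   earlier boxes of that column, with a smaller entry.  The invariant can only
   break when t_{j-1} creates a row of length j-1 above a box of column j (for
   j = 2: when t_1 adds a row on top) while j is still to come; the word then
   reads j ... j-1 ... j, which is excluded. *)

Set Implicit Arguments.
Unset Strict Implicit.
Unset Printing Implicit Defensive.

Section IndexSetNth.

Variables (T : eqType) (x0 x y : T).
Hypothesis neq_yx : y != x.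

Lemma leq_index_set_nth (s : seq T) k : index x s <= index x (set_nth x0 s k y).
Proof.
elim: s k => [|z s IHs] [|k] //=; rewrite ?(negbTE neq_yx) //.
all: by case: ifP; rewrite // ltnS IHs.
Qed.

Lemma index_set_nth_index (s : seq T) :
  index x s < index x (set_nth x0 s (index x s) y).
Proof.
elim: s => [|z s IHs] /=; first by rewrite (negbTE neq_yx).
by case: ifP => zx /=; rewrite ?(negbTE neq_yx) ?zx.
Qed.

End IndexSetNth.

Definition avoids_consecutive_212 (w : seq nat) : Prop :=
  forall u c v, w = u ++ c :: v -> c.+1 \in u -> c.+1 \notin v.

Lemma reverse_hookword_descent w p q r :
  reverse_hookword w -> p < q < r -> r < size w ->
  nth 0 w q < nth 0 w p -> nth 0 w r < nth 0 w q.
Proof.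
case=> k _ [incr decr] /andP [lt_pq lt_qr] lt_r_w lt_qp.
have [le_qk | lt_kq] := leqP q k.
  have le_nth : nth 0 w p <= nth 0 w q.
    have := sorted_leq_nth leq_trans leqnn 0 incr.
    move=> /(_ p q); rewrite !inE !size_take !nth_take; [|lia|lia].
    by apply; rewrite ?(ltnW lt_pq) //; case: ifP; lia.
  by rewrite leqNgt lt_qp in le_nth.
have gt_trans : transitive (fun a b : nat => b < a).
  by move=> a b c lt_ab lt_bc; apply: ltn_trans lt_bc lt_ab.
have := sorted_ltn_nth gt_trans 0 decr.
move=> /(_ (q - k) (r - k)); rewrite !inE !size_drop !nth_drop !subnKC; [|lia|lia].
by apply; lia.
Qed.

Lemma reverse_hookword_avoids_consecutive_212 w :
  reverse_hookword w -> avoids_consecutive_212 w.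
Proof.
move=> rhw u c v def_w in_u; apply/negP => in_v; subst w.
set w := u ++ c :: v in rhw *.
have lt_u : index c.+1 u < size u by rewrite index_mem.
have lt_v : index c.+1 v < size v by rewrite index_mem.
have nth_u : nth 0 w (index c.+1 u) = c.+1 by rewrite nth_cat lt_u nth_index.
have nth_c : nth 0 w (size u) = c by rewrite nth_cat ltnn subnn.
have nth_v : nth 0 w (size u + (index c.+1 v).+1) = c.+1.
  by rewrite nth_cat ltnNge leq_addr addKn /= nth_index.
suff : c.+1 < c by rewrite ltnNge leqnSn.
have := @reverse_hookword_descent w (index c.+1 u) (size u)
  (size u + (index c.+1 v).+1) rhw.
rewrite nth_u nth_c nth_v.
apply; [by apply/andP; split; lia | by rewrite /w size_cat /=; lia | by []].
Qed.

Definition column_decreasing (bs : seq box) : Prop :=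
  forall r1 r2 j m1 m2, 2 <= j ->
    (r1, j, m1) \in bs -> (r2, j, m2) \in bs -> r1 < r2 -> m2 < m1.

(* [F] holds the letters still to be applied.  Box rows are 1-based while
   [index] is 0-based, so [r <= index j.-1 a] puts the row that t_j would
   extend strictly below row [r]. *)
Definition pending_below (F a : seq nat) (bs : seq box) : Prop :=
  forall r j m, (r, j, m) \in bs -> j \in F -> r <= index j.-1 a.

Lemma mem_shift_rows (bs : seq box) r j m :
  (r, j, m) \in [seq (b.1.1.+1, b.1.2, b.2) | b <- bs] ->
  exists2 r', r = r'.+1 & (r', j, m) \in bs.
Proof. by case/mapP=> [[[r' j'] m'] in_bs [-> -> ->]]; exists r'. Qed.

Lemma fill_box_mem l a0 a bs r j m :
  foldr fillStep (Some (a0, [::])) l = Some (a, bs) -> (r, j, m) \in bs ->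
  (m, j) \in l.
Proof.
elim: l a bs r => [|[m' i] l IHl] a bs r /=; first by case=> _ <-.
case run_l: foldr => [[a1 bs1]|] //=; case: tOp => // a'.
case: ifP => [/eqP-> | _] [_ <-]; rewrite !in_cons => /orP [/eqP [_ -> ->]|]; rewrite ?eqxx //.
- by case/mem_shift_rows=> r' _ /(IHl _ _ _ run_l) ->; rewrite orbT.
- by move/(IHl _ _ _ run_l) ->; rewrite orbT.
Qed.

Lemma pending_below_add_row F m a bs :
  pending_below (rcons F 1) a bs -> (2 \in F -> forall r m', (r, 2, m') \notin bs) ->
  pending_below F (1 :: a) ((1, 1, m) :: [seq (b.1.1.+1, b.1.2, b.2) | b <- bs]).
Proof.
move=> below no_col2 r j m'; rewrite in_cons => /orP [/eqP [-> -> _] //|].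
case/mem_shift_rows=> r' -> in_bs in_F /=.
case: eqP => [col2 | _]; last first.
  by rewrite ltnS (below _ _ _ in_bs) // mem_rcons in_cons in_F orbT.
have j2 : j = 2 by lia.
by subst j; move/negP: (no_col2 in_F r' m').
Qed.

Lemma column_decreasing_add_row m bs :
  column_decreasing bs ->
  column_decreasing ((1, 1, m) :: [seq (b.1.1.+1, b.1.2, b.2) | b <- bs]).
Proof.
move=> decr r1 r2 j m1 m2 j2; rewrite !in_cons.
case/orP=> [/eqP [_ j1 _] | /mem_shift_rows [r1' -> in1]]; first by subst j.
case/orP=> [/eqP [_ j1 _] | /mem_shift_rows [r2' -> in2]]; first by subst j.
by rewrite ltnS; apply: decr in1 in2.
Qed.

Lemma pending_below_add_box F m i a bs :
  0 < i -> pending_below (rcons F i) a bs ->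
  (i.+1 \in F -> forall r m', (r, i.+1, m') \notin bs) ->
  pending_below F (set_nth 0 a (index i.-1 a) i) (((index i.-1 a).+1, i, m) :: bs).
Proof.
move=> i_gt0 below no_succ r j m'; rewrite in_cons.
case/orP=> [/eqP [-> -> _] _ | in_bs in_F].
  by apply: index_set_nth_index; lia.
have [succ | not_succ] := eqVneq i j.-1.
  have j_eq : j = i.+1 by lia.
  by subst j; move/negP: (no_succ in_F r m').
apply: leq_trans (below _ _ _ in_bs _) (leq_index_set_nth _ not_succ _ _).
by rewrite mem_rcons in_cons in_F orbT.
Qed.

Lemma column_decreasing_add_box F m i a bs :
  pending_below (rcons F i) a bs -> column_decreasing bs ->
  (forall r j m', (r, j, m') \in bs -> m < m') ->
  column_decreasing (((index i.-1 a).+1, i, m) :: bs).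
Proof.
move=> below decr later r1 r2 j m1 m2 j2; rewrite !in_cons.
have above_new r m' : (r, i, m') \in bs -> r <= index i.-1 a.
  by move=> in_bs; apply: below in_bs _; rewrite mem_rcons mem_head.
case/orP=> [/eqP [-> -> ->] | in1].
  by case/orP=> [/eqP [->] | /above_new le_r2 lt_r2]; [rewrite ltnn | lia].
case/orP=> [/eqP [_ j_eq ->] _ | in2]; last exact: decr in1 in2.
by subst j; move/later: in1.
Qed.

Lemma fillStep_invariant F m i a1 bs1 a bs :
  pending_below (rcons F i) a1 bs1 -> column_decreasing bs1 ->
  (forall r j m', (r, j, m') \in bs1 -> m < m') ->
  (i.+1 \in F -> forall r m', (r, i.+1, m') \notin bs1) ->
  fillStep (m, i) (Some (a1, bs1)) = Some (a, bs) ->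
  pending_below F a bs /\ column_decreasing bs.
Proof.
case: i => [|[|i]] // below decr later no_succ.
  case=> <- <-; split; first exact: pending_below_add_row.
  exact: column_decreasing_add_row.
rewrite /= /tOp /=; case: ifP => // _ [<- <-]; split.
  exact: pending_below_add_box.
exact: column_decreasing_add_box below decr later.
Qed.

Lemma fill_invariant F l a0 a bs :
  sorted ltn (map fst l) -> avoids_consecutive_212 (F ++ map snd l) ->
  foldr fillStep (Some (a0, [::])) l = Some (a, bs) ->
  pending_below F a bs /\ column_decreasing bs.
Proof.
elim: l F a bs => [|[m i] l IHl] F a bs /= sorted_l avoid; first by case=> _ <-.
case run_l: foldr => [[a1 bs1]|] // step.
have avoid_l : avoids_consecutive_212 (rcons F i ++ map snd l) by rewrite cat_rcons.
have [below decr] := IHl (rcons F i) a1 bs1 (path_sorted sorted_l) avoid_l run_l.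
have later r j m' : (r, j, m') \in bs1 -> m < m'.
  move/(fill_box_mem run_l)/(map_f fst).
  exact: (allP (order_path_min ltn_trans sorted_l)).
have no_succ : i.+1 \in F -> forall r m', (r, i.+1, m') \notin bs1.
  move=> in_F r m'; apply/negP => /(fill_box_mem run_l)/(map_f snd) in_l.
  by move: (avoid F i (map snd l) erefl in_F); rewrite in_l.
exact: fillStep_invariant below decr later no_succ step.
Qed.

Theorem mainTheorem7 (alpha beta w : seq nat) (n : nat) :
  composition alpha -> CRHW n w -> applyWord w alpha = Some beta ->
  forall (j r1 r2 m1 m2 : nat), 2 <= j ->
    (r1, j, m1) \in tau w alpha -> (r2, j, m2) \in tau w alpha ->
    r1 < r2 -> m2 < m1.
Proof.
move=> _ [_ _ rhw _] _ j r1 r2 m1 m2 j2.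
rewrite /tau /fillRun; set l := zip _ w; case run: foldr => [[a bs]|] //.
have size_iota_w : size (iota 1 (size w)) = size w by rewrite size_iota.
have sorted_entries : sorted ltn (unzip1 l).
  by rewrite unzip1_zip ?size_iota_w // iota_ltn_sorted.
have avoid : avoids_consecutive_212 (unzip2 l).
  rewrite unzip2_zip ?size_iota_w //.
  exact: reverse_hookword_avoids_consecutive_212.
by have [_ decr] := @fill_invariant [::] _ _ _ _ sorted_entries avoid run; apply: decr.
Qed.
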